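(* Let $m<M$ be real numbers and let $X$ be a random variable taking values in $[m,M]$, either discrete (taking finitely many values $x_1,\dots,x_n\in[m,M]$ with probabilities $p_1,\dots,p_n$) or continuous (with probability density $f$ on $[m,M]$). Let $\mu_1'$ be its mean and $\mu_2,\mu_3,\mu_4$ its second, third and fourth central moments, and assume $\mu_2\neq(\mu_1'-m)(M-\mu_1')$. Then $$\mu_2\mu_4-\mu_2^3-\mu_3^2\le \frac{\big((\mu_1'-m)(M-\mu_1')(M-m)\big)^2}{27}\le\frac{(M-m)^6}{432}.$$
   Context: The mean is $\mu_1'=\sum_{i=1}^n p_i x_i$ (discrete case) or $\mu_1'=\int_m^M x f(x)\,dx$ (continuous case), where $\sum p_i=1$, resp. $\int_m^M f(x)\,dx=1$. The $r$-th central moment is $\mu_r=\sum_{i=1}^n p_i (x_i-\mu_1')^r$, resp. $\mu_r=\int_m^M (x-\mu_1')^r f(x)\,dx$. *)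

From HB Require Import structures.
From mathcomp Require Import all_boot all_order all_algebra.
From mathcomp Require Import all_classical all_reals all_analysis.
Set Implicit Arguments. Unset Strict Implicit. Unset Printing Implicit Defensive.
Import Order.TTheory GRing.Theory Num.Theory.
Local Open Scope ring_scope.
Local Open Scope classical_set_scope.

Definition dmean (R : realType) (n : nat) (p x : 'I_n -> R) : R :=
  \sum_(i < n) p i * x i.

Definition dcmoment (R : realType) (n : nat) (p x : 'I_n -> R) (r : nat) : R :=
  \sum_(i < n) p i * (x i - dmean p x) ^+ r.

Definition cmean (R : realType) (m M : R) (f : R -> R) : R :=
  Rintegral lebesgue_measure `[m, M] (fun x => x * f x).

Definition ccmoment (R : realType) (m M : R) (f : R -> R) (r : nat) : R :=
  Rintegral lebesgue_measure `[m, M] (fun x => (x - cmean m M f) ^+ r * f x).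

Definition is_density_on (R : realType) (m M : R) (f : R -> R) : Prop :=
  [/\ measurable_fun `[m, M] f,
      (forall x, m <= x <= M -> 0 <= f x),
      lebesgue_measure.-integrable `[m, M] (fun x => (f x)%:E)
    & Rintegral lebesgue_measure `[m, M] f = 1].

(* Write a = mu1 - m and b = M - mu1.  The centred moment vector
   (1, 0, mu2, mu3, mu4) pairs nonnegatively with every quartic that is
   nonnegative on [-a, b].  Testing it against y^2, (y + a)(b - y) and
   (y + a)(b - y)(l1 - e y)^2 gives 0 <= mu2 <= ab and e l2 >= l1^2, where
   e, l1, l2 are the moments of order 0, 1, 2 of the measure (y + a)(b - y) dP.
   As mu2 != ab forces e > 0, an explicit sum-of-squares identity turns these
   into the first inequality; the second is AM-GM, 4ab <= (a + b)^2. *)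
From HB Require Import structures.
From mathcomp Require Import all_boot all_order all_algebra.
From mathcomp Require Import all_classical all_reals all_analysis.
From mathcomp Require Import measurable_realfun ring lra.
Import Order.TTheory GRing.Theory Num.Theory.
Import numFieldNormedType.Exports.
Local Open Scope ring_scope.
Local Open Scope classical_set_scope.

(* The only property of a centred law on [lo, hi] that the argument uses. *)
Definition quartic_moments {R : numDomainType} (lo hi mu2 mu3 mu4 : R) : Prop :=
  forall k0 k1 k2 k3 k4 : R,
    (forall y, lo <= y <= hi ->
       0 <= k0 + k1 * y + k2 * y ^+ 2 + k3 * y ^+ 3 + k4 * y ^+ 4) ->
    0 <= k0 + k2 * mu2 + k3 * mu3 + k4 * mu4.

Section QuarticMoments.
Context {R : realFieldType} {a b mu2 mu3 mu4 : R}.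
Hypothesis hmom : quartic_moments (- a) b mu2 mu3 mu4.

Let c := a * b.
Let d := b - a.
Let e := c - mu2.
Let l1 := d * mu2 - mu3.
Let l2 := c * mu2 + d * mu3 - mu4.

Lemma interval_weight_ge0 (y : R) : - a <= y <= b -> 0 <= (y + a) * (b - y).
Proof. by case/andP=> hay hyb; apply: mulr_ge0; lra. Qed.

Lemma quartic_moments_var_ge0 : 0 <= mu2.
Proof.
suff: 0 <= 0 + 1 * mu2 + 0 * mu3 + 0 * mu4 by lra.
by apply: (hmom _ 0) => y _; have := sqr_ge0 y; lra.
Qed.

Lemma quartic_moments_var_le : mu2 <= c.
Proof.
suff: 0 <= c + -1 * mu2 + 0 * mu3 + 0 * mu4 by lra.
apply: (hmom _ d) => y /interval_weight_ge0.
by rewrite /c /d; lra.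
Qed.

Lemma quartic_moments_hankel : 0 <= e * (e * l2 - l1 ^+ 2).
Proof.
have -> : e * (e * l2 - l1 ^+ 2) =
    c * l1 ^+ 2 + (- l1 ^+ 2 - 2 * d * e * l1 + c * e ^+ 2) * mu2
    + (2 * e * l1 + d * e ^+ 2) * mu3 + - e ^+ 2 * mu4.
  by rewrite /e /l1 /l2; ring.
apply: (hmom _ (d * l1 ^+ 2 - 2 * c * e * l1)) => y /interval_weight_ge0 hw.
have -> : c * l1 ^+ 2 + (d * l1 ^+ 2 - 2 * c * e * l1) * y
    + (- l1 ^+ 2 - 2 * d * e * l1 + c * e ^+ 2) * y ^+ 2
    + (2 * e * l1 + d * e ^+ 2) * y ^+ 3 + - e ^+ 2 * y ^+ 4
    = (y + a) * (b - y) * (l1 - e * y) ^+ 2.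
  by rewrite /c /d; ring.
exact: mulr_ge0 hw (sqr_ge0 _).
Qed.

Hypothesis hne : mu2 != c.

Lemma quartic_moments_gap_gt0 : 0 < e.
Proof.
by rewrite lt_def subr_eq0 eq_sym hne subr_ge0 quartic_moments_var_le.
Qed.

Lemma quartic_moments_mul_gt0 : 0 < c.
Proof. by have := quartic_moments_gap_gt0; have := quartic_moments_var_ge0; rewrite /e; lra. Qed.

Lemma quartic_moments_bound :
  mu2 * mu4 - mu2 ^+ 3 - mu3 ^+ 2 <= (c * (a + b)) ^+ 2 / 27.
Proof.
have he := quartic_moments_gap_gt0; have hc := quartic_moments_mul_gt0.
have hmu2 := quartic_moments_var_ge0.
have hH : 0 <= e * l2 - l1 ^+ 2 by rewrite -(pmulr_rge0 _ he) quartic_moments_hankel.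
rewrite -subr_ge0 -(pmulr_rge0 _ he).
have -> : e * ((c * (a + b)) ^+ 2 / 27 - (mu2 * mu4 - mu2 ^+ 3 - mu3 ^+ 2)) =
    mu2 * (e * l2 - l1 ^+ 2) + c * (mu3 - d * mu2 * (c + mu2) / (2 * c)) ^+ 2
    + e * ((a + b) ^+ 2 / (108 * c)) * (3 * mu2 - 2 * c) ^+ 2 * (3 * mu2 + c).
  rewrite /e /l1 /l2 /d /c; field.
  by move: (negbT (gt_eqF hc)); rewrite /c mulf_eq0 negb_or andbC.
apply: addr_ge0; first apply: addr_ge0.
- exact: mulr_ge0.
- exact: mulr_ge0 (ltW hc) (sqr_ge0 _).
- apply: mulr_ge0; last lra.
  apply: mulr_ge0 (sqr_ge0 _).
  exact: mulr_ge0 (ltW he) (divr_ge0 (sqr_ge0 _) (mulr_ge0 (ler0n _ _) (ltW hc))).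
Qed.

End QuarticMoments.

Lemma mul_addr_sqr_le (R : realFieldType) (a b : R) : 0 <= a * b ->
  (a * b * (a + b)) ^+ 2 / 27 <= (a + b) ^+ 6 / 432.
Proof.
move=> hab.
have hamgm : 4 * (a * b) <= (a + b) ^+ 2 by have := sqr_ge0 (a - b); lra.
have hsq : (4 * (a * b)) ^+ 2 <= ((a + b) ^+ 2) ^+ 2.
  by rewrite !expr2; apply: ler_pM => //; rewrite mulr_ge0.
have := ler_wpM2r (sqr_ge0 (a + b)) hsq; lra.
Qed.

Lemma moment_inequality (R : realFieldType) (m M mu1 mu2 mu3 mu4 : R) :
  quartic_moments (m - mu1) (M - mu1) mu2 mu3 mu4 ->
  mu2 != (mu1 - m) * (M - mu1) ->
  mu2 * mu4 - mu2 ^+ 3 - mu3 ^+ 2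
    <= ((mu1 - m) * (M - mu1) * (M - m)) ^+ 2 / 27
  /\ ((mu1 - m) * (M - mu1) * (M - m)) ^+ 2 / 27 <= (M - m) ^+ 6 / 432.
Proof.
rewrite -(opprB mu1 m) (_ : M - m = (mu1 - m) + (M - mu1)); last by ring.
move=> hmom hne; split; first exact: quartic_moments_bound.
exact/mul_addr_sqr_le/ltW/(quartic_moments_mul_gt0 hmom).
Qed.

Section DiscreteMoments.
Context {R : realType} {n : nat} {x p : 'I_n -> R}.
Hypothesis hp1 : \sum_(i < n) p i = 1.

Lemma dcmoment0 : dcmoment p x 0 = 1.
Proof. by rewrite /dcmoment; under eq_bigr do rewrite expr0 mulr1. Qed.

Lemma dcmoment1 : dcmoment p x 1 = 0.
Proof.
rewrite /dcmoment; under eq_bigr do rewrite expr1 mulrBr.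
by rewrite sumrB -mulr_suml hp1 mul1r subrr.
Qed.

Lemma dquartic_moments {m M : R} :
  (forall i, m <= x i <= M) -> (forall i, 0 <= p i) ->
  quartic_moments (m - dmean p x) (M - dmean p x)
    (dcmoment p x 2) (dcmoment p x 3) (dcmoment p x 4).
Proof.
move=> hx hp k0 k1 k2 k3 k4 hq.
set y := fun i => x i - dmean p x.
have hsum : \sum_(i < n) p i * (k0 + k1 * y i + k2 * y i ^+ 2 + k3 * y i ^+ 3
                                + k4 * y i ^+ 4)
    = k0 * dcmoment p x 0 + k1 * dcmoment p x 1 + k2 * dcmoment p x 2
      + k3 * dcmoment p x 3 + k4 * dcmoment p x 4.
  rewrite /dcmoment !mulr_sumr -!big_split /=.
  by apply: eq_bigr => i _; rewrite /y; ring.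
rewrite dcmoment0 dcmoment1 mulr1 mulr0 addr0 in hsum; rewrite -hsum.
apply: sumr_ge0 => i _; apply: mulr_ge0 => //; apply: hq.
by have /andP[hmx hxM] := hx i; rewrite /y !lerB.
Qed.

End DiscreteMoments.

Section IntegrableLinear.
Context {d : measure_display} {T : measurableType d} {R : realType}.
Context {mu : measure T R} {D : set T}.
Hypothesis mD : measurable D.

Lemma integrableZ {G : T -> R} (k : R) :
  mu.-integrable D (EFin \o G) -> mu.-integrable D (EFin \o (fun x => k * G x)).
Proof.
move=> iG; have := integrableZl mD k iG.
by apply: eq_integrable => // x _ /=; rewrite EFinM.
Qed.

Lemma integrable_addZ {F G : T -> R} (k : R) :
  mu.-integrable D (EFin \o F) -> mu.-integrable D (EFin \o G) ->
  mu.-integrable D (EFin \o (fun x => F x + k * G x)).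
Proof.
move=> iF iG; have := integrableD mD iF (integrableZ k iG).
by apply: eq_integrable => // x _ /=; rewrite EFinD.
Qed.

Lemma Rintegral_addZ {F G : T -> R} (k : R) :
  mu.-integrable D (EFin \o F) -> mu.-integrable D (EFin \o G) ->
  Rintegral mu D (fun x => F x + k * G x) = Rintegral mu D F + k * Rintegral mu D G.
Proof.
by move=> iF iG; rewrite RintegralD ?RintegralZl //; exact: integrableZ.
Qed.

End IntegrableLinear.

Lemma continuous_subrX (R : realType) (c : R) (j : nat) :
  continuous (fun x : R => (x - c) ^+ j).
Proof.
move=> x; have hB : {for x, continuous (fun x : R => x - c)}.
  by apply: cvgB; [exact: cvg_id | exact: cvg_cst].
exact: continuous_comp hB (@exprn_continuous R j (x - c)).
Qed.

Section DensityMoments.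
Context {R : realType} {m M : R} {f : R -> R}.
Hypothesis hf : is_density_on m M f.
Notation mu := (@lebesgue_measure R).

Lemma integrable_continuous_mul (g : R -> R) : continuous g ->
  mu.-integrable `[m, M] (EFin \o (fun x => g x * f x)).
Proof.
case: hf => _ _ fi _ gc.
have mg : measurable_fun `[m, M] g.
  exact: measurable_funTS (continuous_measurable_fun gc).
have bg : [bounded g x | x in `[m, M]].
  have /compact_bounded[B [_ hB]] := continuous_compact
    (continuous_subspaceT (A := `[m, M]) gc) (@segment_compact _ m M).
  by exists B; split; rewrite ?num_real // => ? ? ? ?; exact: hB.
have := integrableMr (mu := mu) (measurable_itv _) mg bg fi.
by apply: eq_integrable => [|x _ /=]; [exact: measurable_itv | rewrite EFinM].
Qed.

Lemma integrable_ccmoment (j : nat) :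
  mu.-integrable `[m, M] (EFin \o (fun x => (x - cmean m M f) ^+ j * f x)).
Proof. exact/integrable_continuous_mul/continuous_subrX. Qed.

Lemma ccmoment0 : ccmoment m M f 0 = 1.
Proof.
case: hf => _ _ _ <-; apply: eq_Rintegral => x _.
by rewrite expr0 mul1r.
Qed.

Lemma ccmoment1 : ccmoment m M f 1 = 0.
Proof.
have ixf : mu.-integrable `[m, M] (EFin \o (fun x => x * f x)).
  by apply: (integrable_continuous_mul id) => x; exact: cvg_id.
have [_ _ fi f1] := hf.
have -> : ccmoment m M f 1
    = Rintegral mu `[m, M] (fun x => x * f x + - cmean m M f * f x).
  by apply: eq_Rintegral => x _; rewrite expr1; ring.
by rewrite (Rintegral_addZ (mu := mu) (measurable_itv _) _ ixf fi) f1 mulr1 subrr.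
Qed.

Lemma cquartic_moments :
  quartic_moments (m - cmean m M f) (M - cmean m M f)
    (ccmoment m M f 2) (ccmoment m M f 3) (ccmoment m M f 4).
Proof.
have [_ f0 _ _] := hf.
move=> k0 k1 k2 k3 k4 hq.
pose T j x := (x - cmean m M f) ^+ j * f x.
have i0 := integrableZ (mu := mu) (measurable_itv _) k0 (integrable_ccmoment 0).
have i1 := integrable_addZ (mu := mu) (measurable_itv _) k1 i0 (integrable_ccmoment 1).
have i2 := integrable_addZ (mu := mu) (measurable_itv _) k2 i1 (integrable_ccmoment 2).
have i3 := integrable_addZ (mu := mu) (measurable_itv _) k3 i2 (integrable_ccmoment 3).
have -> : k0 + k2 * ccmoment m M f 2 + k3 * ccmoment m M f 3 + k4 * ccmoment m M f 4
    = Rintegral mu `[m, M] (fun x => k0 * T 0 x + k1 * T 1 x + k2 * T 2 x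
                                     + k3 * T 3 x + k4 * T 4 x).
  rewrite (Rintegral_addZ (mu := mu) (measurable_itv _) _ i3 (integrable_ccmoment 4)).
  rewrite (Rintegral_addZ (mu := mu) (measurable_itv _) _ i2 (integrable_ccmoment 3)).
  rewrite (Rintegral_addZ (mu := mu) (measurable_itv _) _ i1 (integrable_ccmoment 2)).
  rewrite (Rintegral_addZ (mu := mu) (measurable_itv _) _ i0 (integrable_ccmoment 1)).
  rewrite (RintegralZl (mu := mu) _ (measurable_itv _) (integrable_ccmoment 0)).
  by rewrite -/(ccmoment m M f 0) -/(ccmoment m M f 1) ccmoment0 ccmoment1 mulr1 mulr0 addr0.
apply: Rintegral_ge0 => x; rewrite /= in_itv /= => /andP[hmx hxM].
have -> : k0 * T 0 x + k1 * T 1 x + k2 * T 2 x + k3 * T 3 x + k4 * T 4 x =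
    (k0 + k1 * (x - cmean m M f) + k2 * (x - cmean m M f) ^+ 2
     + k3 * (x - cmean m M f) ^+ 3 + k4 * (x - cmean m M f) ^+ 4) * f x.
  by rewrite /T; ring.
by apply: mulr_ge0; [apply: hq; rewrite !lerB | apply: f0; rewrite hmx].
Qed.

End DensityMoments.

Theorem corollary2p3 (R : realType) (m M : R) (hmM : m < M) :
  (* discrete case *)
  (forall (n : nat) (x p : 'I_n -> R),
     (forall i, m <= x i <= M) ->
     (forall i, 0 <= p i) ->
     \sum_(i < n) p i = 1 ->
     let mu1 := dmean p x in
     let mu2 := dcmoment p x 2 in
     let mu3 := dcmoment p x 3 in
     let mu4 := dcmoment p x 4 in
     mu2 != (mu1 - m) * (M - mu1) ->
     mu2 * mu4 - mu2 ^+ 3 - mu3 ^+ 2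
       <= ((mu1 - m) * (M - mu1) * (M - m)) ^+ 2 / 27
     /\ ((mu1 - m) * (M - mu1) * (M - m)) ^+ 2 / 27 <= (M - m) ^+ 6 / 432)
  /\
  (* continuous case *)
  (forall f : R -> R,
     is_density_on m M f ->
     let mu1 := cmean m M f in
     let mu2 := ccmoment m M f 2 in
     let mu3 := ccmoment m M f 3 in
     let mu4 := ccmoment m M f 4 in
     mu2 != (mu1 - m) * (M - mu1) ->
     mu2 * mu4 - mu2 ^+ 3 - mu3 ^+ 2
       <= ((mu1 - m) * (M - mu1) * (M - m)) ^+ 2 / 27
     /\ ((mu1 - m) * (M - mu1) * (M - m)) ^+ 2 / 27 <= (M - m) ^+ 6 / 432).
Proof.
split=> [n x p hx hp hp1 | f hf] mu1 mu2 mu3 mu4 hne.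
- exact: moment_inequality (dquartic_moments hp1 hx hp) hne.
- exact: moment_inequality (cquartic_moments hf) hne.
Qed.
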